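(* Let $S$ be a subcartesian space and $\mathcal{F}$ a family of vector fields on $S$. Then the function $\delta_{\mathcal{F}}:S\to\mathbb{Z}$, $\delta_{\mathcal{F}}(x)=\dim\check T^{\mathcal{F}}_xS$, is lower semicontinuous.
   Context: A subcartesian space is a paracompact, second-countable, Hausdorff differential space $(S,C^\infty(S))$ locally diffeomorphic to differential subspaces of Euclidean spaces. The (Zariski) tangent space $T_xS$ is the vector space of linear maps $v:C^\infty(S)\to\mathbb{R}$ with $v(fg)=f(x)v(g)+g(x)v(f)$. A derivation of $C^\infty(S)$ is a linear $X:C^\infty(S)\to C^\infty(S)$ satisfying Leibniz's rule; $X|_x(f):=(Xf)(x)$. Every derivation $X$ has, through each $x$, a unique maximal integral curve $t\mapsto\exp(tX)(x)$ (a smooth map from a maximal interval $I^X_x\ni0$ with $\frac{d}{dt}(f\circ\exp(tX)(x))=(Xf)(\exp(tX)(x))$). $X$ is a vector field if $(t,x)\mapsto\exp(tX)(x)$ is a local flow, i.e. its domain $\{(t,x):t\in I^X_x\}$ is open in $\mathbb{R}\times S$. For a family $\mathcal{F}$ of vector fields, $\check T^{\mathcal{F}}_xS$ is the linear span of $\{X|_x: X\in\mathcal{F}\}$ in $T_xS$. *)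

From HB Require Import structures.
From mathcomp Require Import all_boot all_order all_algebra.
From mathcomp Require Import all_classical all_reals all_analysis.
From mathcomp Require Import Rstruct Rstruct_topology.
Set Implicit Arguments. Unset Strict Implicit. Unset Printing Implicit Defensive.
Import Order.TTheory GRing.Theory Num.Theory.
Import numFieldNormedType.Exports.
Local Open Scope classical_set_scope.
Local Open Scope ring_scope.

Section Subcartesian.
Variable R : realType.

Fixpoint Ck {V : normedModType R} (k : nat) (f : V -> R) : Prop :=
  match k with
  | 0 => continuous f
  | k'.+1 => (forall x v, derivable f x v) /\
             (forall v, Ck k' (fun x => 'D_v f x))
  end.
Definition smooth {V : normedModType R} (f : V -> R) : Prop := forall k, Ck k f.

Variable S : Type.

(* The topology on S generated by a family C of functions S -> R
   (smallest topology making each f in C continuous). *)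
Definition dopen (C : set (S -> R)) (U : set S) : Prop :=
  forall x, U x -> exists (n : nat) (fs : 'I_n -> S -> R) (e : R),
    0 < e /\ (forall i, C (fs i)) /\
    (forall y, (forall i, `|fs i y - fs i x| < e) -> U y).

Definition diff_space (C : set (S -> R)) : Prop :=
  (forall (n : nat) (F : 'rV[R]_n -> R) (fs : 'I_n -> S -> R),
     smooth F -> (forall i, C (fs i)) -> C (fun x => F (\row_i fs i x))) /\
  (forall f : S -> R,
     (forall x, exists U g, dopen C U /\ U x /\ C g /\
                  (forall y, U y -> f y = g y)) -> C f).

(* smooth functions on the differential subspace A of (S, C), represented
   by arbitrary extensions S -> R (values off A are irrelevant). *)
Definition induced (C : set (S -> R)) (A : set S) (f : S -> R) : Prop :=
  forall a, A a -> exists U g, dopen C U /\ U a /\ C g /\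
    (forall y, A y -> U y -> f y = g y).

Definition hausdorff (C : set (S -> R)) : Prop :=
  forall x y, x <> y -> exists U V, dopen C U /\ dopen C V /\ U x /\ V y /\
    U `&` V = set0.

Definition second_countable (C : set (S -> R)) : Prop :=
  exists B : nat -> set S, (forall k, dopen C (B k)) /\
    (forall U, dopen C U -> forall x, U x -> exists k, B k x /\ B k `<=` U).

Definition paracompact (C : set (S -> R)) : Prop :=
  forall (I : Type) (W : I -> set S),
    (forall i, dopen C (W i)) -> (forall x, exists i, W i x) ->
    exists (J : Type) (V : J -> set S),
      (forall j, dopen C (V j)) /\ (forall x, exists j, V j x) /\
      (forall j, exists i, V j `<=` W i) /\
      (forall x, exists N, dopen C (N) /\ N x /\
          finite_set [set j | N `&` V j !=set0]).
End Subcartesian.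

Definition smooth_on_Rn (R : realType) (n : nat) (V : set 'rV[R]_n)
  (f : 'rV[R]_n -> R) : Prop := induced (@smooth R _) V f.

Definition diffeo_to_Rn (R : realType) (S : Type) (C : set (S -> R))
  (U : set S) (n : nat) (V : set 'rV[R]_n)
  (phi : S -> 'rV[R]_n) (psi : 'rV[R]_n -> S) : Prop :=
  (forall y, U y -> V (phi y) /\ psi (phi y) = y) /\
  (forall z, V z -> U (psi z) /\ phi (psi z) = z) /\
  (forall f, smooth_on_Rn V f -> induced C U (f \o phi)) /\
  (forall g, induced C U g -> smooth_on_Rn V (g \o psi)).

Definition subcartesian (R : realType) (S : Type) (C : set (S -> R)) : Prop :=
  diff_space C /\ hausdorff C /\ second_countable C /\ paracompact C /\
  (forall x, exists (U : set S) (n : nat) (V : set 'rV[R]_n) phi psi,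
      dopen C U /\ U x /\ diffeo_to_Rn C U V phi psi).

Definition derivation (R : realType) (S : Type) (C : set (S -> R))
  (X : (S -> R) -> (S -> R)) : Prop :=
  (forall f, C f -> C (X f)) /\
  (forall (a b : R) f g, C f -> C g ->
      forall y, X (fun z => a * f z + b * g z) y = a * X f y + b * X g y) /\
  (forall f g, C f -> C g ->
      forall y, X (fun z => f z * g z) y = f y * X g y + g y * X f y).

Definition is_interval (R : realType) (I : set R) : Prop :=
  forall a b t, I a -> I b -> a <= t <= b -> I t.

(* derivative of g at t within I (vacuous if t is isolated in I) *)
Definition deriv_within (R : realType) (I : set R) (g : R -> R) (t l : R) : Prop :=
  (fun s => (g s - g t) / (s - t)) @ within (fun s => I s /\ s <> t) (nbhs t)
    --> l.

Definition integral_curve (R : realType) (S : Type) (C : set (S -> R))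
  (X : (S -> R) -> (S -> R)) (x : S) (I : set R) (c : R -> S) : Prop :=
  is_interval I /\ I 0 /\ c 0 = x /\
  (forall f, C f -> induced (@smooth R _) I (f \o c) /\
     forall t, I t -> deriv_within I (f \o c) t (X f (c t))).

(* {(t, x) : t ∈ I^X_x}: I^X_x is the domain of the maximal integral curve,
   i.e. the union of the domains of all integral curves through x. *)
Definition flow_domain (R : realType) (S : Type) (C : set (S -> R))
  (X : (S -> R) -> (S -> R)) : set (R * S) :=
  fun p => exists I c, integral_curve C X p.2 I c /\ I p.1.

Definition open_RxS (R : realType) (S : Type) (C : set (S -> R))
  (W : set (R * S)) : Prop :=
  forall t x, W (t, x) -> exists (e : R) U, 0 < e /\ dopen C U /\ U x /\
    forall s y, `|s - t| < e -> U y -> W (s, y).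

Definition vector_field (R : realType) (S : Type) (C : set (S -> R))
  (X : (S -> R) -> (S -> R)) : Prop :=
  derivation C X /\ open_RxS C (flow_domain C X).

Definition in_span (R : realType) (S : Type) (C : set (S -> R))
  (F : set ((S -> R) -> (S -> R))) (x : S) (v : (S -> R) -> R) : Prop :=
  exists (m : nat) (Xs : 'I_m -> (S -> R) -> (S -> R)) (c : 'I_m -> R),
    (forall j, F (Xs j)) /\
    forall f, C f -> v f = \sum_(j < m) c j * Xs j f x.

Definition lin_indep (R : realType) (S : Type) (C : set (S -> R)) (k : nat)
  (vs : 'I_k -> (S -> R) -> R) : Prop :=
  forall a : 'I_k -> R, (forall f, C f -> \sum_(i < k) a i * vs i f = 0) ->
    forall i, a i = 0.

(* delta_F(x) = dim \check T^F_x S >= k *)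
Definition delta_ge (R : realType) (S : Type) (C : set (S -> R))
  (F : set ((S -> R) -> (S -> R))) (x : S) (k : nat) : Prop :=
  exists vs : 'I_k -> (S -> R) -> R,
    (forall i, in_span C F x (vs i)) /\ lin_indep C vs.

(* lower semicontinuity of delta_F: {y | delta_F(y) >= k} is a neighbourhood
   of each of its points, for every k. *)
Definition delta_lsc (R : realType) (S : Type) (C : set (S -> R))
  (F : set ((S -> R) -> (S -> R))) : Prop :=
  forall x k, delta_ge C F x k ->
    exists U, dopen C U /\ U x /\ forall y, U y -> delta_ge C F y k.

(* If tangent vectors v_1, ..., v_k in the span at x are linearly independent,
   they are already independent on finitely many test functions f_1, ..., f_n:
   the n x k matrix (v_i f_l) has a left inverse.  Write each v_i as a fixed
   combination of the X|_x, X in F; the same combinations at y give a matrix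
   whose entries are finitely many smooth, hence continuous, functions of y.
   A matrix close enough to one with a left inverse still has trivial kernel,
   so the combinations at y stay independent for y near x. *)

From mathcomp Require Import all_boot all_order all_algebra.
From mathcomp Require Import all_classical all_reals all_analysis.
From mathcomp Require Import Rstruct Rstruct_topology.
From Stdlib Require Import Reals.
From mathcomp Require Import zify lra.
Set Implicit Arguments. Unset Strict Implicit. Unset Printing Implicit Defensive.
Import Order.TTheory GRing.Theory Num.Theory.
Local Open Scope ring_scope.

Section SpanningRows.
Variables (K : fieldType) (T : Type) (P : T -> Prop).
Variables (k : nat) (w : T -> 'rV[K]_k).

Definition rows_in n (A : 'M[K]_(n, k)) :=
  forall l, exists2 t, P t & row l A = w t.

Lemma rows_in_col_mx n (A : 'M[K]_(n, k)) t :
  rows_in A -> P t -> rows_in (col_mx A (w t)).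
Proof.
move=> A_rows Pt l; rewrite -[l]splitK; case: (fintype.split l) => l' /=.
  by rewrite rowKu; apply: A_rows.
by exists t => //; rewrite rowKd (ord1 l') row_id.
Qed.

(* Any family of rows of maximal rank will do. *)
Lemma exists_spanning_rows :
  exists n (A : 'M[K]_(n, k)), rows_in A /\ forall t, P t -> (w t <= A)%MS.
Proof.
pose Q (r : nat) :=
  `[< exists n (A : 'M[K]_(n, k)), rows_in A /\ \rank A = r >].
have Q0 : Q 0%nat.
  by apply/asboolP; exists 0%nat, 0; split; [case | exact: mxrank0].
have Q_le r : Q r -> (r <= k)%nat.
  by move=> /asboolP [n [A [_ <-]]]; exact: rank_leq_col.
have [r /asboolP [n [A [A_rows <-]]] rank_max] :=
  ex_maxnP (ex_intro Q 0%nat Q0) Q_le.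
exists n, A; split=> // t Pt.
have sAAw : (A <= col_mx A (w t))%MS by rewrite -addsmxE addsmxSl.
have rank_le : (\rank (col_mx A (w t)) <= \rank A)%nat.
  apply: rank_max; apply/asboolP; exists (n + 1)%nat, (col_mx A (w t)).
  by split=> //; exact: rows_in_col_mx.
have [rank_ge rank_eq] := mxrank_leqif_sup sAAw.
have : (col_mx A (w t) <= A)%MS by rewrite -rank_eq eqn_leq rank_ge rank_le.
by rewrite col_mx_sub => /andP[].
Qed.

Lemma row_full_of_trivial_kernel :
  (forall a : 'cV[K]_k, (forall t, P t -> w t *m a = 0) -> a = 0) ->
  exists n (ts : 'I_n -> T),
    (forall l, P (ts l)) /\ row_full (\matrix_l w (ts l)).
Proof.
move=> ker0; have [n [A [A_rows spanA]]] := exists_spanning_rows.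
exists n, (fun l => projT1 (cid2 (A_rows l))); split=> [l|].
  by case: (cid2 (A_rows l)).
have -> : \matrix_l w (projT1 (cid2 (A_rows l))) = A.
  by apply/row_matrixP => l; rewrite rowK; case: (cid2 (A_rows l)).
have coker0 : cokermx A = 0.
  apply/matrixP => i j.
  suff /matrixP/(_ i 0) : col j (cokermx A) = 0 by rewrite !mxE.
  apply: ker0 => t Pt; move: (spanA t Pt); rewrite submxE => /eqP wA0.
  by rewrite colE mulmxA wA0 mul0mx.
have := mxrank_coker A; rewrite coker0 mxrank0 /row_full => rank_eq.
by rewrite eqn_leq rank_leq_col /=; lia.
Qed.

End SpanningRows.

Lemma ler_norm_sum_mulB (R : numDomainType) n (c u v : 'I_n -> R) (e : R) :
  (forall j, `|u j - v j| <= e) ->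
  `|\sum_j c j * u j - \sum_j c j * v j| <= (\sum_j `|c j|) * e.
Proof.
move=> uv_le; rewrite -sumrB mulr_suml; apply: (le_trans (ler_norm_sum _ _ _)).
by apply: ler_sum => j _; rewrite -mulrBr normrM ler_wpM2l.
Qed.

Section NearIdentity.
Variable R : realFieldType.

Lemma mulmx_near_id_eq0 k (B : 'M[R]_k) (a : 'cV[R]_k) (d : R) :
  (forall i j, `|B i j - (i == j)%:R| <= d) -> k%:R * d < 1 ->
  B *m a = 0 -> a = 0.
Proof.
move=> B_near kd_lt1 Ba0.
set Sa := \sum_i `|a i 0|.
have Sa_ge0 : 0 <= Sa by apply: sumr_ge0 => *.
have a_le i : `|a i 0| <= d * Sa.
  have a_eq : a i 0 = - \sum_j (B i j - (i == j)%:R) * a j 0.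
    have : (B *m a) i 0 = 0 by rewrite Ba0 mxE.
    rewrite mxE => Bai; under eq_bigr do rewrite mulrBl.
    rewrite sumrB Bai (bigD1 i) //= eqxx mul1r big1 ?addr0 ?sub0r ?opprK //.
    by move=> j /negbTE; rewrite eq_sym => ->; rewrite mul0r.
  rewrite a_eq normrN mulr_sumr; apply: (le_trans (ler_norm_sum _ _ _)).
  by apply: ler_sum => j _; rewrite normrM ler_wpM2r.
have : Sa <= k%:R * d * Sa.
  apply: (@le_trans _ _ (\sum_(i < k) d * Sa)); first exact: ler_sum.
  by rewrite sumr_const card_ord mulr_natl mulrnAl.
move: kd_lt1; set c := k%:R * d => c_lt1 Sa_le; have Sa_le0 : Sa <= 0 by nra.
apply/matrixP => i j; rewrite (ord1 j) mxE; apply/normr0_eq0/eqP.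
rewrite eq_le normr_ge0 andbT (le_trans _ Sa_le0) // /Sa (bigD1 i) //= lerDl.
exact: sumr_ge0.
Qed.

Lemma left_invertible_near_eq0 k n (L : 'M[R]_(k, n)) (M0 M : 'M[R]_(n, k))
    (a : 'cV[R]_k) (eps : R) :
  L *m M0 = 1%:M -> 0 <= eps -> (forall l j, `|M l j - M0 l j| <= eps) ->
  k%:R * (\sum_i \sum_l `|L i l|) * eps < 1 -> M *m a = 0 -> a = 0.
Proof.
move=> LM0 eps_ge0 M_near small Ma0.
apply: (@mulmx_near_id_eq0 _ (L *m M) _ ((\sum_i \sum_l `|L i l|) * eps)).
- move=> i j; have -> : (i == j)%:R = (L *m M0) i j by rewrite LM0 mxE.
  rewrite !mxE.
  apply: le_trans (ler_norm_sum_mulB _ (M_near^~ j)) _; rewrite ler_wpM2r //.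
  by rewrite (bigD1 i) //= lerDl; apply: sumr_ge0 => *; exact: sumr_ge0.
- by rewrite mulrA.
- by rewrite -mulmxA Ma0 mulmx0.
Qed.

End NearIdentity.

Local Open Scope classical_set_scope.

Section TestFunctions.
Variables (R : realType) (S : Type) (C : set (S -> R)).

Lemma dopen_sum_lt (T : finType) (G : T -> S -> R) (x : S) (e : R) :
  (forall t, C (G t)) -> dopen C [set y | \sum_t `|G t y - G t x| < e].
Proof.
move=> CG z /= Sz_lt; set Sz := \sum_t `|G t z - G t x|.
set e' := (e - Sz) / (#|T|%:R + 1).
have card_gt0 : 0 < #|T|%:R + 1 :> R by rewrite ltr_wpDl.
have e'_gt0 : 0 < e' by rewrite divr_gt0 // subr_gt0.
exists #|T|, (fun i => G (enum_val i)), e'; split=> //; split=> [i|y near_z /=].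
  exact: CG.
have near_z' t : `|G t y - G t z| < e'.
  by have := near_z (enum_rank t); rewrite enum_rankK.
have : \sum_t `|G t y - G t x| <= Sz + #|T|%:R * e'.
  rewrite mulr_natl -sumr_const /Sz -big_split /=.
  apply: ler_sum => t _; rewrite -[G t y - _](subrKA (G t z)) addrC.
  by apply: (le_trans (ler_normD _ _)); rewrite lerD2r ltW.
move=> sum_le; suff : #|T|%:R * e' < e - Sz by lra.
rewrite /e' mulrA ltr_pdivrMr // [X in _ < X]mulrDr mulr1 mulrC ltrDl.
by rewrite subr_gt0.
Qed.

Lemma lin_indep_kernel k (vs : 'I_k -> (S -> R) -> R) (a : 'cV[R]_k) :
  lin_indep C vs -> (forall f, C f -> \row_i vs i f *m a = 0) -> a = 0.
Proof.
move=> vs_indep va0; apply/matrixP => i j; rewrite (ord1 j) mxE.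
apply: (vs_indep (fun i => a i 0)) => f Cf.
move/matrixP/(_ 0 0): (va0 f Cf); rewrite !mxE => va0f; rewrite -[RHS]va0f.
by apply: eq_bigr => i' _; rewrite mxE mulrC.
Qed.

Lemma lin_indep_of_test_mx k n (vs : 'I_k -> (S -> R) -> R)
    (fs : 'I_n -> S -> R) :
  (forall l, C (fs l)) ->
  (forall a : 'cV[R]_k, \matrix_(l, i) vs i (fs l) *m a = 0 -> a = 0) ->
  lin_indep C vs.
Proof.
move=> Cfs ker0 a va0 i.
suff /matrixP/(_ i 0) : \col_i a i = 0 by rewrite !mxE.
apply: ker0; apply/matrixP => l j; rewrite !mxE -[RHS](va0 _ (Cfs l)).
by apply: eq_bigr => i' _; rewrite !mxE mulrC.
Qed.

Lemma in_span_coefficients (F : set ((S -> R) -> (S -> R))) (x : S) k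
    (vs : 'I_k -> (S -> R) -> R) :
  (forall i, in_span C F x (vs i)) ->
  exists (m : 'I_k -> nat) (Xs : forall i, 'I_(m i) -> (S -> R) -> (S -> R))
         (c : forall i, 'I_(m i) -> R),
    (forall i j, F (Xs i j)) /\
    forall i f, C f -> vs i f = \sum_(j < m i) c i j * Xs i j f x.
Proof.
move=> vs_span.
pose Comb := {m : nat & ('I_m -> (S -> R) -> (S -> R)) * ('I_m -> R)}%type.
have /choice [p p_spec] : forall i, exists q : Comb,
    (forall j, F ((projT2 q).1 j)) /\ forall f, C f ->
    vs i f = \sum_(j < projT1 q) (projT2 q).2 j * (projT2 q).1 j f x.
  by move=> i; have [m [Xs [c ?]]] := vs_span i; exists (existT _ m (Xs, c)).
by exists (fun i => projT1 (p i)), (fun i => (projT2 (p i)).1),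
  (fun i => (projT2 (p i)).2); split=> i; case: (p_spec i).
Qed.

End TestFunctions.

Lemma delta_lsc_of_stable (R : realType) (S : Type) (C : set (S -> R))
    (F : set ((S -> R) -> (S -> R))) :
  (forall X, F X -> forall f, C f -> C (X f)) -> delta_lsc C F.
Proof.
move=> F_stable x k [vs [vs_span vs_indep]].
have [m [Xs [c [XsF vs_eq]]]] := in_span_coefficients vs_span.
have [n [fs [Cfs /row_fullP [L LW]]]] := row_full_of_trivial_kernel
  (w := fun f => \row_i vs i f) (fun a => lin_indep_kernel (a := a) vs_indep).
pose v y i f := \sum_(j < m i) c i j * Xs i j f y.
pose W y : 'M[R]_(n, k) := \matrix_(l, i) v y i (fs l).
have W_x : \matrix_l \row_i vs i (fs l) = W x.
  by apply/matrixP => l i; rewrite !mxE vs_eq.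
rewrite W_x in LW.
pose G (t : 'I_n * {i : 'I_k & 'I_(m i)}) := Xs (tag t.2) (tagged t.2) (fs t.1).
pose Ls := \sum_i \sum_l `|L i l|.
pose Cc := 1 + \sum_i \sum_(j < m i) `|c i j|.
(* eps makes [left_invertible_near_eq0] applicable; moving every test value
   by less than eps / Cc moves every entry of W by at most eps. *)
pose eps := (k%:R * Ls + 1)^-1.
have Ls_ge0 : 0 <= Ls by apply: sumr_ge0 => *; exact: sumr_ge0.
have Cc_gt0 : 0 < Cc by rewrite ltr_wpDr // sumr_ge0 // => *; exact: sumr_ge0.
have eps_gt0 : 0 < eps by rewrite invr_gt0 ltr_wpDl // mulr_ge0.
exists [set y | \sum_t `|G t y - G t x| < eps / Cc]; split.
  by apply: dopen_sum_lt => t; apply: F_stable (XsF _ _) _ (Cfs _).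
split; first by rewrite /= big1 ?divr_gt0 // => t _; rewrite subrr normr0.
move=> y /= near_x; exists (v y); split.
  by move=> i; exists (m i), (Xs i), (c i).
apply: (lin_indep_of_test_mx Cfs) => a Wa0.
apply: (left_invertible_near_eq0 LW (ltW eps_gt0) _ _ Wa0).
- move=> l i; rewrite !mxE.
  have G_near j : `|Xs i j (fs l) y - Xs i j (fs l) x| <= eps / Cc.
    apply/ltW/(le_lt_trans _ near_x).
    rewrite (bigD1 (l, Tagged (fun i => 'I_(m i)) j)) //= lerDl.
    exact: sumr_ge0.
  apply: (le_trans (ler_norm_sum_mulB _ G_near)).
  rewrite -[leRHS](divfK (lt0r_neq0 Cc_gt0)) mulrC ler_wpM2l ?divr_ge0 ?ltW //.
  rewrite /Cc (bigD1 i) //= addrCA ltrDl ltr_wpDr // sumr_ge0 // => *.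
  exact: sumr_ge0.
- by rewrite /eps ltr_pdivrMr ?mul1r ?ltrDl // ltr_wpDl // mulr_ge0.
Qed.

Theorem lemmal (S : Type) (C : set (S -> R)) (HS : subcartesian C)
  (F : set ((S -> R) -> (S -> R)))
  (HF : forall X, F X -> vector_field C X) :
  delta_lsc C F.
Proof. by apply: delta_lsc_of_stable => X /HF [[]]. Qed.
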